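(* Assume (A1)–(A3). Let $[s,e]$ contain exactly one true change point $\tau_k$, with $s\le\tau_k<e$, and set $n_1=\tau_k-s+1$, $n_2=e-\tau_k$, $n=n_1+n_2$, $\rho=n_1n_2/n$. Then \[ C(s,e)-C(s,\tau_k)-C(\tau_k+1,e)\ge \rho\,\Delta_k^2-\Bigl((4m+2)M+\frac{(2m^2+2m)M}{n}\Bigr). \] If in addition $n_1\ge\ell_T/2$ and $n_2\ge\ell_T/2$, where $\ell_T=\min_{1\le j\le K+1}(\tau_j-\tau_{j-1})$, then \[ C(s,e)-C(s,\tau_k)-C(\tau_k+1,e)\ge \frac{\Delta_\star^2}{4}\ell_T-\Bigl((4m+2)M+\frac{(2m^2+2m)M}{\ell_T}\Bigr). \]
   Context: Let $Y_1,\dots,Y_T$ be random vectors in $\mathbb R^d$ with true change points $0=\tau_0<\tau_1<\dots<\tau_K<\tau_{K+1}=T$. Let $k:\mathbb R^d\times\mathbb R^d\to\mathbb R$ be a positive definite kernel with RKHS $\mathcal H$ and feature map $\phi(y)=k(y,\cdot)$; for a distribution $P$ let $\mu_P=\mathbb E_{Y\sim P}\phi(Y)\in\mathcal H$. For $1\le s\le e\le T$ define $\widehat C(s,e)=\sum_{t=s}^e k(Y_t,Y_t)-\frac{1}{e-s+1}\sum_{i=s}^e\sum_{j=s}^e k(Y_i,Y_j)$ and $C(s,e)=\mathbb E[\widehat C(s,e)]$. (A1) For a fixed integer $m\ge0$, $(Y_t)$ is $m$-dependent: for every $t$, $(Y_1,\dots,Y_t)$ is independent of $(Y_{t+m+1},\dots,Y_T)$;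 for each $k=1,\dots,K+1$, $(Y_t)_{\tau_{k-1}<t\le\tau_k}$ is strictly stationary with marginal $P_k$. (A2) $k$ is bounded and characteristic, $0\le k(x,y)\le M<\infty$. (A3) $\Delta_k^2:=\|\mu_{P_k}-\mu_{P_{k+1}}\|_{\mathcal H}^2>0$ for $k=1,\dots,K$, and $\Delta_\star^2:=\min_k\Delta_k^2>0$. *)

From HB Require Import structures.
From mathcomp Require Import all_boot all_order all_algebra.
From mathcomp Require Import all_classical all_reals all_analysis.
Set Implicit Arguments. Unset Strict Implicit. Unset Printing Implicit Defensive.
Import Order.TTheory GRing.Theory Num.Theory.
Local Open Scope classical_set_scope.
Local Open Scope ring_scope.

(* Observation space R^d is modelled as [dd.-tuple R] with the product
   (= Borel) sigma-algebra generated by the coordinate maps. *)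

Section defs.
Context {R : realType} {dd : nat}.
Local Notation X := (dd.-tuple R).

Definition pos_def_kernel (k : X -> X -> R) : Prop :=
  (forall x y, k x y = k y x) /\
  (forall (n : nat) (x : 'I_n -> X) (c : 'I_n -> R),
      0 <= \sum_(i < n) \sum_(j < n) c i * c j * k (x i) (x j)).

Definition mean_emb (k : X -> X -> R) (P : probability X R) : X -> R :=
  fun y => Rintegral P setT (fun x => k x y).

Definition characteristic (k : X -> X -> R) : Prop :=
  forall P Q : probability X R, mean_emb k P = mean_emb k Q ->
    forall A, measurable A -> P A = Q A.

(* ||mu_P - mu_Q||_H^2 = <mu_P,mu_P> + <mu_Q,mu_Q> - 2 <mu_P,mu_Q>,
   with <mu_P,mu_Q>_H = \int\int k dP dQ (reproducing property). *)
Definition mmd2 (k : X -> X -> R) (P Q : probability X R) : R :=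
  Rintegral P setT (fun x => Rintegral P setT (fun y => k x y))
  + Rintegral Q setT (fun x => Rintegral Q setT (fun y => k x y))
  - 2 * Rintegral P setT (fun x => Rintegral Q setT (fun y => k x y)).

Context {dO : measure_display} {Omega : measurableType dO}.

Definition Chat (k : X -> X -> R) (Y : nat -> Omega -> X) (s e : nat)
  : Omega -> R := fun w =>
  \sum_(s <= t < e.+1) k (Y t w) (Y t w)
  - (e - s + 1)%N%:R^-1 * \sum_(s <= i < e.+1) \sum_(s <= j < e.+1) k (Y i w) (Y j w).

Definition Cexp (P : probability Omega R) (k : X -> X -> R)
  (Y : nat -> Omega -> X) (s e : nat) : R :=
  Rintegral P setT (Chat k Y s e).

Definition sig_gen (Y : nat -> Omega -> X) (I : set nat) : set (set Omega) :=
  <<s [set B | exists i, I i /\ exists A, measurable A /\ B = Y i @^-1` A] >>.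

Definition indep_sigma (P : probability Omega R) (F G : set (set Omega)) : Prop :=
  forall E1 E2, F E1 -> G E2 -> P (E1 `&` E2) = (P E1 * P E2)%E.

Definition m_dependent (P : probability Omega R) (Y : nat -> Omega -> X)
  (T m : nat) : Prop :=
  forall t, indep_sigma P (sig_gen Y [set i | (1 <= i <= t)%N])
                          (sig_gen Y [set i | (t + m + 1 <= i <= T)%N]).

Definition stationary_on (P : probability Omega R) (Y : nat -> Omega -> X)
  (a b : nat) : Prop :=
  forall (n : nat) (ts : 'I_n -> nat) (h : nat) (A : 'I_n -> set X),
    (forall i, (a < ts i)%N /\ (ts i + h <= b)%N) ->
    (forall i, measurable (A i)) ->
    P (\bigcap_(i in [set: 'I_n]) (Y (ts i) @^-1` A i)) =
    P (\bigcap_(i in [set: 'I_n]) (Y (ts i + h)%N @^-1` A i)).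

Definition marginal_on (P : probability Omega R) (Y : nat -> Omega -> X)
  (a b : nat) (Q : probability X R) : Prop :=
  forall t, (a < t <= b)%N -> forall A, measurable A -> P (Y t @^-1` A) = Q A.

End defs.

Definition Delta_star2 {R : realType} (Delta2 : nat -> R) (K : nat) : R :=
  \big[Num.min/Delta2 1%N]_(1 <= j < K.+1) Delta2 j.

Definition ell_T (tau : nat -> nat) (K T : nat) : nat :=
  \big[minn/T]_(1 <= j < K.+2) (tau j - tau j.-1)%N.

From HB Require Import structures.
From mathcomp Require Import all_boot all_order all_algebra.
From mathcomp Require Import all_classical all_reals all_analysis.
From mathcomp Require Import measurable_realfun ring lra zify.
Import Order.TTheory GRing.Theory Num.Theory.
Local Open Scope classical_set_scope.
Local Open Scope ring_scope.

(** Writing E_ij for the expectation of k(Y_i, Y_j), the gain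
   C(s,e) - C(s,tau) - C(tau+1,e) is an explicit combination of the sums of
   E_ij over the two diagonal blocks and the off-diagonal block of [s, e]^2.
   When |i - j| > m, m-dependence makes Y_i and Y_j independent, and Fubini
   turns E_ij into the double integral of k against the marginals of the
   blocks containing i and j.  Only O(m n) diagonal and O(m^2) off-diagonal
   pairs escape this, each off by at most M, and the constants left over
   assemble into rho * ||mu_P - mu_Q||^2.  For a segment whose two parts both
   have length at least l_T / 2, rho >= l_T / 4 and n >= l_T. *)

Section finite_sum_Rintegral.
Context {R : realType} {d : measure_display} {T : measurableType d}.
Context {mu : {measure set T -> \bar R}}.

Lemma integrable_sumr {I : Type} {r : seq I} {F : I -> T -> R} :
  (forall i, mu.-integrable setT (EFin \o F i)) ->
  mu.-integrable setT (EFin \o (fun x => \sum_(i <- r) F i x)).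
Proof.
move=> iF; apply: (eq_integrable _ (fun x => \sum_(i <- r) (EFin \o F i) x)%E) => //.
  by move=> x _ /=; rewrite sumEFin.
exact: integrable_sum.
Qed.

Lemma Rintegral_sum (I : Type) (r : seq I) (F : I -> T -> R) :
  (forall i, mu.-integrable setT (EFin \o F i)) ->
  \int[mu]_x (\sum_(i <- r) F i x) = \sum_(i <- r) \int[mu]_x F i x.
Proof.
move=> iF; elim: r => [|i r IH].
  rewrite big_nil (eq_Rintegral _ (g := cst 0)) => [|x _]; last by rewrite big_nil.
  by rewrite Rintegral_cst // mul0r.
rewrite big_cons -IH -RintegralD //; last exact: integrable_sumr.
by apply: eq_Rintegral => x _; rewrite big_cons.
Qed.

End finite_sum_Rintegral.

Section probability_Rintegral.
Context {R : realType} {d : measure_display} {T : measurableType d}.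
Context (mu : probability T R).

Lemma bounded_integrable (f : T -> R) (C : R) : measurable_fun setT f ->
  (forall x, `|f x| <= C) -> mu.-integrable setT (EFin \o f).
Proof.
move=> mf fC; apply: measurable_bounded_integrable => //.
  by apply: (le_lt_trans (probability_le1 mu measurableT)); rewrite ltry.
exists C; split; first by rewrite num_real.
by move=> M CM x _; apply: le_trans (fC x) (ltW CM).
Qed.

Lemma Rintegral_bounded (f : T -> R) (C : R) : measurable_fun setT f ->
  (forall x, 0 <= f x <= C) -> 0 <= \int[mu]_x f x <= C.
Proof.
move=> mf fC; rewrite Rintegral_ge0 => [/=|x _]; last by case/andP: (fC x).
have fC' x : `|f x| <= C by case/andP: (fC x) => f0 ?; rewrite ger0_norm.
have cstC (x : T) : `|cst C x| <= C.
  by rewrite /= ger0_norm //; exact: le_trans (normr_ge0 _) (fC' x).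
apply: (@le_trans _ _ (\int[mu]_x cst C x)).
  apply: le_Rintegral => //; [exact: bounded_integrable fC'|exact: bounded_integrable cstC|].
  by move=> x _; case/andP: (fC x).
have mu1 : fine (mu setT) = 1 by rewrite /= (probability_setT mu).
by rewrite Rintegral_cst // mu1 mulr1.
Qed.

End probability_Rintegral.

Section kernel_expectation.
Context {R : realType} {d1 d2 : measure_display}.
Context {T1 : measurableType d1} {T2 : measurableType d2}.
Context {k : T1 -> T2 -> R} {M : R}.
Hypothesis k_meas : measurable_fun setT (fun p : T1 * T2 => k p.1 p.2).
Hypothesis k_bound : forall x y, 0 <= k x y <= M.

Let kE_meas : measurable_fun setT (fun p : T1 * T2 => (k p.1 p.2)%:E).
Proof. exact/measurable_EFinP. Qed.

Let kE_ge0 (p : T1 * T2) : (0 <= (k p.1 p.2)%:E)%E.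
Proof. by rewrite lee_fin; case/andP: (k_bound p.1 p.2). Qed.

Let k_section_integrable (Q : probability T2 R) x :
  Q.-integrable setT (EFin \o k x).
Proof.
apply: (bounded_integrable Q (k x) M); first exact: (measurable_fun_pair2 x k_meas).
by move=> y; case/andP: (k_bound x y) => k0 kM; rewrite ger0_norm.
Qed.

Lemma iterated_kernel_bounded (Q1 : probability T1 R) (Q2 : probability T2 R) :
  0 <= \int[Q1]_x \int[Q2]_y k x y <= M.
Proof.
apply: Rintegral_bounded => [|x].
  exact: measurableT_comp (@fine_measurable R setT measurableT)
    (@measurable_fun_fubini_tonelli_F _ _ _ _ _ Q2 _ kE_meas kE_ge0).
by apply: Rintegral_bounded; [exact: (measurable_fun_pair2 x k_meas)|exact: k_bound].
Qed.

Lemma expectation_kernel_indep {dO : measure_display} {Omega : measurableType dO}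
    {P : probability Omega R} {U : Omega -> T1} {V : Omega -> T2}
    {Q1 : probability T1 R} {Q2 : probability T2 R} :
  measurable_fun setT U -> measurable_fun setT V ->
  (forall A B, measurable A -> measurable B ->
     P (U @^-1` A `&` V @^-1` B) = (Q1 A * Q2 B)%E) ->
  \int[P]_w k (U w) (V w) = \int[Q1]_x \int[Q2]_y k x y.
Proof.
move=> mU mV PUV; pose f w := (U w, V w).
have mf : measurable_fun setT f := measurable_fun_pair mU mV.
have lawE X : measurable X -> (Q1 \x Q2)%E X = pushforward P f X.
  by apply: product_measure_unique => A B mA mB; rewrite /pushforward -PUV.
rewrite /Rintegral; congr fine.
transitivity (\int[Q1 \x Q2]_p (k p.1 p.2)%:E)%E.
  rewrite (eq_measure_integral (pushforward P f)) => [|X mX _]; last exact: lawE.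
  by rewrite ge0_integral_pushforward.
rewrite fubini_tonelli1 //; apply: eq_integral => x _.
by rewrite fineK // integrable_fin_num //; exact: k_section_integrable.
Qed.

End kernel_expectation.

Lemma sum_nat_itv_indicator_le (lo hi x y : nat) :
  (\sum_(lo <= j < hi) ((x <= j) && (j < y)) <= y - x)%N.
Proof.
suff : (\sum_(lo <= j < hi) ((x <= j) && (j < y)) <= minn hi y - x)%N.
  by move/leq_trans; apply; lia.
elim: hi => [|hi IH]; first by rewrite big_geq.
have [lh|hl] := leqP lo hi; last by rewrite big_geq.
by rewrite big_nat_recr //=; case: (leqP x hi); case: (ltnP hi y) => /=; lia.
Qed.

Section segment_cost.
Context {R : realFieldType}.

Definition block_sum (E : nat -> nat -> R) (lo1 hi1 lo2 hi2 : nat) : R :=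
  \sum_(lo1 <= i < hi1) \sum_(lo2 <= j < hi2) E i j.

(* [seg_cost E lo hi] is the cost of the half-open index range [lo, hi), so
   C(s, e) corresponds to [seg_cost E s e.+1]. *)
Definition seg_cost (E : nat -> nat -> R) (lo hi : nat) : R :=
  \sum_(lo <= t < hi) E t t - (hi - lo)%:R^-1 * block_sum E lo hi lo hi.

Lemma block_sum_split E lo mid hi : (lo <= mid <= hi)%N ->
  block_sum E lo hi lo hi =
    block_sum E lo mid lo mid + block_sum E lo mid mid hi
    + block_sum E mid hi lo mid + block_sum E mid hi mid hi.
Proof.
move=> /andP[lm mh]; rewrite /block_sum (big_cat_nat lm mh) /=.
under [in X in X + _]eq_bigr do rewrite (big_cat_nat lm mh).
under [in X in _ + X]eq_bigr do rewrite (big_cat_nat lm mh).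
by rewrite /= 2!big_split /= !addrA.
Qed.

Lemma block_sum_sym E lo1 hi1 lo2 hi2 : (forall i j, E i j = E j i) ->
  block_sum E lo1 hi1 lo2 hi2 = block_sum E lo2 hi2 lo1 hi1.
Proof.
move=> Esym; rewrite /block_sum exchange_big.
by apply: eq_bigr => i _; apply: eq_bigr => j _; exact: Esym.
Qed.

Lemma seg_cost_split {E lo mid hi} {n1 n2 : R} :
  (forall i j, E i j = E j i) -> (lo < mid < hi)%N ->
  n1 = (mid - lo)%:R -> n2 = (hi - mid)%:R ->
  seg_cost E lo hi - seg_cost E lo mid - seg_cost E mid hi =
    n2 / ((n1 + n2) * n1) * block_sum E lo mid lo mid
    + n1 / ((n1 + n2) * n2) * block_sum E mid hi mid hi
    - 2 / (n1 + n2) * block_sum E lo mid mid hi.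
Proof.
move=> Esym /andP[lm mh] n1E n2E.
have n1_gt0 : 0 < n1 by rewrite n1E ltr0n subn_gt0.
have n2_gt0 : 0 < n2 by rewrite n2E ltr0n subn_gt0.
have nE : (hi - lo)%:R = n1 + n2.
  by rewrite n1E n2E -natrD (_ : hi - lo = mid - lo + (hi - mid))%N //; lia.
have lmh : (lo <= mid <= hi)%N by rewrite (ltnW lm) (ltnW mh).
rewrite /seg_cost (big_cat_nat (ltnW lm) (ltnW mh)) /= (block_sum_split _ _ _ _ lmh).
rewrite (block_sum_sym _ mid hi lo mid Esym) nE -n1E -n2E.
by field; rewrite !lt0r_neq0 // addr_gt0.
Qed.

Lemma block_sum_near_const {E} {a M : R} {near : nat -> nat -> bool}
    {lo1 hi1 lo2 hi2 N : nat} :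
  0 <= M ->
  (forall i j, (lo1 <= i < hi1)%N -> (lo2 <= j < hi2)%N ->
     `|E i j - a| <= M * (near i j)%:R) ->
  (\sum_(lo1 <= i < hi1) \sum_(lo2 <= j < hi2) near i j <= N)%N ->
  `|block_sum E lo1 hi1 lo2 hi2 - (hi1 - lo1)%:R * (hi2 - lo2)%:R * a|
    <= M * N%:R.
Proof.
move=> M0 Enear countN.
have -> : block_sum E lo1 hi1 lo2 hi2 - (hi1 - lo1)%:R * (hi2 - lo2)%:R * a
    = \sum_(lo1 <= i < hi1) \sum_(lo2 <= j < hi2) (E i j - a).
  under [RHS]eq_bigr do rewrite sumrB sumr_const_nat.
  rewrite sumrB sumr_const_nat -mulrnA -[a *+ _]mulr_natl natrM.
  by rewrite [X in X * a]mulrC.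
apply: le_trans (ler_norm_sum _ _ _) _.
apply: (@le_trans _ _ (\sum_(lo1 <= i < hi1) \sum_(lo2 <= j < hi2) M * (near i j)%:R)).
  apply: ler_sum_nat => i i_in; apply: le_trans (ler_norm_sum _ _ _) _.
  by apply: ler_sum_nat => j j_in; exact: Enear.
under eq_bigr do rewrite -mulr_sumr -natr_sum.
by rewrite -mulr_sumr -natr_sum ler_wpM2l // ler_nat.
Qed.

End segment_cost.

Section near_diagonal_dependence.
Context {R : realFieldType} {E : nat -> nat -> R} {M : R} (m : nat).
Hypothesis E_sym : forall i j, E i j = E j i.
Hypothesis E_bound : forall i j, 0 <= E i j <= M.

Let M_ge0 : 0 <= M.
Proof. by case/andP: (E_bound 0 0) => E0; apply: le_trans. Qed.

Let dist_le_bound (a : R) i j : 0 <= a <= M -> `|E i j - a| <= M.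
Proof.
case/andP=> a0 aM; case/andP: (E_bound i j) => E0 EM.
by rewrite ler_distl; apply/andP; split; lra.
Qed.

Lemma block_sum_diag_ge {lo hi a} : 0 <= a <= M ->
  (forall i j, (lo <= i)%N -> (i + m < j)%N -> (j < hi)%N -> E i j = a) ->
  (hi - lo)%:R * (hi - lo)%:R * a - M * ((hi - lo) * (2 * m + 1))%:R
    <= block_sum E lo hi lo hi.
Proof.
move=> a_bound far; pose near i j := ((i - m <= j) && (j < i + m + 1))%N.
have near_dist i j : (lo <= i < hi)%N -> (lo <= j < hi)%N ->
    `|E i j - a| <= M * (near i j)%:R.
  move=> /andP[li ih] /andP[lj jh].
  have [_|far_ij] := boolP (near i j); first by rewrite mulr1 dist_le_bound.
  rewrite mulr0 normr_le0 subr_eq0; move: far_ij; rewrite negb_and -ltnNge -leqNgt.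
  by case/orP=> [ji|ij]; [rewrite E_sym far //; lia|rewrite far //; lia].
have count_near : (\sum_(lo <= i < hi) \sum_(lo <= j < hi) near i j
    <= (hi - lo) * (2 * m + 1))%N.
  rewrite -sum_nat_const_nat; apply: leq_sum => i _.
  by apply: leq_trans (sum_nat_itv_indicator_le _ _ _ _) _; lia.
by have := block_sum_near_const M_ge0 near_dist count_near; rewrite ler_distl => /andP[].
Qed.

Lemma block_sum_cross_le {lo mid hi c} : 0 <= c <= M ->
  (forall i j, (lo <= i < mid)%N -> (mid <= j < hi)%N -> (i + m < j)%N ->
     E i j = c) ->
  block_sum E lo mid mid hi <= (mid - lo)%:R * (hi - mid)%:R * c + M * (m * m)%:R.
Proof.
move=> c_bound far.
pose near i j := ((mid - m <= i < mid) && (mid <= j < mid + m))%N.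
have near_dist i j : (lo <= i < mid)%N -> (mid <= j < hi)%N ->
    `|E i j - c| <= M * (near i j)%:R.
  move=> iA jB; have [_|far_ij] := boolP (near i j).
    by rewrite mulr1 dist_le_bound.
  rewrite mulr0 normr_le0 subr_eq0 far //.
  by move: far_ij iA jB; rewrite !negb_and -!ltnNge; lia.
have count_near : (\sum_(lo <= i < mid) \sum_(mid <= j < hi) near i j <= m * m)%N.
  under eq_bigr do (under eq_bigr do rewrite -mulnb; rewrite -big_distrr /=).
  rewrite -big_distrl /=.
  by apply: leq_mul; apply: leq_trans (sum_nat_itv_indicator_le _ _ _ _) _; lia.
by have := block_sum_near_const M_ge0 near_dist count_near; rewrite ler_distl => /andP[].
Qed.

Lemma seg_cost_gain_ge {lo mid hi : nat} {n1 n2 a b c : R} : (lo < mid < hi)%N ->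
  n1 = (mid - lo)%:R -> n2 = (hi - mid)%:R ->
  0 <= a <= M -> 0 <= b <= M -> 0 <= c <= M ->
  (forall i j, (lo <= i)%N -> (i + m < j)%N -> (j < mid)%N -> E i j = a) ->
  (forall i j, (mid <= i)%N -> (i + m < j)%N -> (j < hi)%N -> E i j = b) ->
  (forall i j, (lo <= i < mid)%N -> (mid <= j < hi)%N -> (i + m < j)%N ->
     E i j = c) ->
  n1 * n2 / (n1 + n2) * (a + b - 2 * c)
    - ((4 * m%:R + 2) * M + (2 * m%:R ^+ 2 + 2 * m%:R) * M / (n1 + n2))
  <= seg_cost E lo hi - seg_cost E lo mid - seg_cost E mid hi.
Proof.
move=> lmh n1E n2E a_bd b_bd c_bd farA farB farAB.
have /andP[lm mh] := lmh.
have n1_gt0 : 0 < n1 by rewrite n1E ltr0n subn_gt0.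
have n2_gt0 : 0 < n2 by rewrite n2E ltr0n subn_gt0.
have SAA := block_sum_diag_ge a_bd farA.
have SBB := block_sum_diag_ge b_bd farB.
have SAB := block_sum_cross_le c_bd farAB.
rewrite !natrM natrD natrM -n1E -n2E in SAA SBB SAB.
rewrite (seg_cost_split E_sym lmh n1E n2E).
set n := n1 + n2.
have n_gt0 : 0 < n by rewrite addr_gt0.
have p_ge0 : 0 <= n2 / (n * n1) by rewrite divr_ge0 ?mulr_ge0 ?ltW.
have q_ge0 : 0 <= n1 / (n * n2) by rewrite divr_ge0 ?mulr_ge0 ?ltW.
have r_ge0 : 0 <= 2 / n by rewrite divr_ge0 ?ltW.
apply: le_trans (lerB (lerD (ler_wpM2l p_ge0 SAA) (ler_wpM2l q_ge0 SBB))
  (ler_wpM2l r_ge0 SAB)); rewrite -subr_ge0.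
(* The block bounds yield the sharper error (2m+1)M + 2m^2 M/n; the rest is slack. *)
rewrite [X in 0 <= X](_ : _ = (2 * m%:R + 1) * M + 2 * m%:R * M / n).
  have m_ge0 : 0 <= m%:R :> R by rewrite ler0n.
  by apply: addr_ge0; [|apply: divr_ge0 (ltW n_gt0)]; apply: mulr_ge0; lra.
by rewrite /n; field; rewrite !lt0r_neq0.
Qed.

End near_diagonal_dependence.

Section m_dependent_process.
Context {R : realType} {dd : nat} {dO : measure_display} {Omega : measurableType dO}.
Context {P : probability Omega R} {Y : nat -> Omega -> dd.-tuple R} {T m : nat}.
Context {k : dd.-tuple R -> dd.-tuple R -> R} {M : R}.
Hypothesis Y_meas : forall t, measurable_fun setT (Y t).
Hypothesis k_meas : measurable_fun setT (fun p : dd.-tuple R * dd.-tuple R => k p.1 p.2).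
Hypothesis k_bound : forall x y, 0 <= k x y <= M.

Let kY_meas i j : measurable_fun setT (fun w => k (Y i w) (Y j w)).
Proof. exact: measurableT_comp k_meas (measurable_fun_pair (Y_meas i) (Y_meas j)). Qed.

Let kY_integrable i j : P.-integrable setT (EFin \o (fun w => k (Y i w) (Y j w))).
Proof.
apply: (bounded_integrable P _ M (kY_meas i j)) => w.
by case/andP: (k_bound (Y i w) (Y j w)) => k0 kM; rewrite ger0_norm.
Qed.

Lemma expectation_kernel_bounded i j : 0 <= \int[P]_w k (Y i w) (Y j w) <= M.
Proof. by apply: Rintegral_bounded (kY_meas i j) _ => w; exact: k_bound. Qed.

Lemma Cexp_seg_cost s e : (s <= e)%N ->
  Cexp P k Y s e = seg_cost (fun i j => \int[P]_w k (Y i w) (Y j w)) s e.+1.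
Proof.
move=> se; rewrite /Cexp /Chat /seg_cost /block_sum (_ : e - s + 1 = e.+1 - s)%N; last by lia.
have kY_row i : P.-integrable setT
    (EFin \o (fun w => \sum_(s <= j < e.+1) k (Y i w) (Y j w))).
  exact: integrable_sumr.
rewrite RintegralB //; [|exact: integrable_sumr|]; last first.
  apply: eq_integrable measurableT _ _ _ (integrableZl measurableT _ (integrable_sumr kY_row)).
  by move=> w _ /=; rewrite EFinM.
rewrite RintegralZl //; last exact: integrable_sumr.
rewrite !Rintegral_sum //; congr (_ - _ * _); apply: eq_bigr => i _.
exact: Rintegral_sum.
Qed.

Hypothesis m_dep : m_dependent P Y T m.

Lemma m_dependent_indep_pair i j A B : (1 <= i)%N -> (i + m < j <= T)%N ->
  measurable A -> measurable B ->
  P (Y i @^-1` A `&` Y j @^-1` B) = (P (Y i @^-1` A) * P (Y j @^-1` B))%E.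
Proof.
move=> i1 /andP[ij jT] mA mB; apply: (m_dep i); apply: sub_gen_smallest.
  by exists i; split; [rewrite /= leqnn i1 | exists A].
by exists j; split; [rewrite /= jT andbT addn1 | exists B].
Qed.

Lemma expectation_kernel_far i j (Q1 Q2 : probability (dd.-tuple R) R) :
  (1 <= i)%N -> (i + m < j <= T)%N ->
  (forall A, measurable A -> P (Y i @^-1` A) = Q1 A) ->
  (forall A, measurable A -> P (Y j @^-1` A) = Q2 A) ->
  \int[P]_w k (Y i w) (Y j w) = \int[Q1]_x \int[Q2]_y k x y.
Proof.
move=> i1 ijT law_i law_j.
apply: (expectation_kernel_indep k_meas k_bound (Y_meas i) (Y_meas j)) => A B mA mB.
by rewrite m_dependent_indep_pair // law_i // law_j.
Qed.

End m_dependent_process.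

Lemma change_points_around_segment {tau : nat -> nat} {K T kk s e : nat} :
  tau 0 = 0%N -> tau K.+1 = T -> (forall j, (j <= K)%N -> (tau j < tau j.+1)%N) ->
  (1 <= kk <= K)%N -> (1 <= s)%N -> (e <= T)%N -> (s <= tau kk < e)%N ->
  (forall j, (1 <= j <= K)%N -> (s <= tau j <= e)%N -> j = kk) ->
  (tau kk.-1 < s)%N /\ (e <= tau kk.+1)%N.
Proof.
move=> tau0 tauT tau_lt kkK s1 eT /andP[s_tk tk_e] unique; split.
- case: (ltnP (tau kk.-1) s) => // s_le; exfalso.
  have [kk1|kk_gt1] := eqVneq kk 1%N; first by move: s_le; rewrite kk1 tau0; lia.
  have := tau_lt kk.-1; rewrite prednK; last by lia.
  by have := unique kk.-1; lia.
- case: (leqP e (tau kk.+1)) => // tk1_lt; exfalso.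
  have [kk_lt|kk_ge] := ltnP kk K; first by have := tau_lt kk; have := unique kk.+1; lia.
  have kkE : kk = K by lia.
  by move: tk1_lt; rewrite kkE tauT; lia.
Qed.

Lemma ell_T_gt0 {tau : nat -> nat} {K T : nat} :
  tau K.+1 = T -> (forall j, (j <= K)%N -> (tau j < tau j.+1)%N) ->
  (0 < ell_T tau K T)%N.
Proof.
move=> tauT tau_lt; rewrite /ell_T big_nat_cond.
apply: (big_ind (fun x => 0 < x)%N) => [|x y x0 y0|j /andP[/andP[j1 jK] _]].
- by rewrite -tauT; have := tau_lt K (leqnn K); lia.
- by rewrite leq_min x0 y0.
- by have := tau_lt j.-1; rewrite prednK //; lia.
Qed.

Lemma Delta_star2_le {R : realType} (D : nat -> R) (K j : nat) :
  (1 <= j <= K)%N -> Delta_star2 D K <= D j.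
Proof. by move=> jK; apply: ge_bigmin_seq; rewrite // mem_index_iota ltnS. Qed.

Lemma gain_lower_balanced {R : realFieldType} (n1 n2 l D Ds C X : R) :
  0 < l -> l / 2 <= n1 -> l / 2 <= n2 -> 0 <= Ds <= D -> 0 <= X ->
  Ds / 4 * l - (C + X / l) <= n1 * n2 / (n1 + n2) * D - (C + X / (n1 + n2)).
Proof.
move=> l_gt0 ln1 ln2 /andP[Ds0 DsD] X0.
have n_gt0 : 0 < n1 + n2 by lra.
have rho_ge : l / 4 <= n1 * n2 / (n1 + n2) by rewrite ler_pdivlMr //; nra.
have gain_ge : l / 4 * Ds <= n1 * n2 / (n1 + n2) * D.
  apply: le_trans (ler_wpM2r Ds0 rho_ge) (ler_wpM2l _ DsD); lra.
have slack_le : X / (n1 + n2) <= X / l.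
  by apply: ler_wpM2l => //; rewrite lef_pV2 ?posrE //; lra.
lra.
Qed.

Theorem mainTheorem6
  (R : realType) (dd : nat) (dO : measure_display) (Omega : measurableType dO)
  (P : probability Omega R) (Y : nat -> Omega -> dd.-tuple R)
  (T K m : nat) (tau : nat -> nat) (Pk : nat -> probability (dd.-tuple R) R)
  (k : dd.-tuple R -> dd.-tuple R -> R) (M : R)
  (* random vectors *)
  (HYmeas : forall t, measurable_fun setT (Y t))
  (* change points 0 = tau_0 < tau_1 < ... < tau_K < tau_{K+1} = T *)
  (Htau0 : tau 0%N = 0%N) (HtauT : tau K.+1 = T)
  (Htau_incr : forall j, (j <= K)%N -> (tau j < tau j.+1)%N)
  (* (A1) *)
  (Hmdep : m_dependent P Y T m)
  (Hstat : forall j, (1 <= j <= K.+1)%N ->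
      stationary_on P Y (tau j.-1) (tau j) /\ marginal_on P Y (tau j.-1) (tau j) (Pk j))
  (* (A2) *)
  (Hkmeas : measurable_fun [set: dd.-tuple R * dd.-tuple R] (fun p => k p.1 p.2))
  (Hkpd : pos_def_kernel k) (Hkchar : characteristic k)
  (HkM : forall x y, 0 <= k x y <= M)
  (* (A3) *)
  (HDelta : forall j, (1 <= j <= K)%N -> 0 < mmd2 k (Pk j) (Pk j.+1))
  (HDstar : 0 < Delta_star2 (fun j => mmd2 k (Pk j) (Pk j.+1)) K)
  (* the segment [s,e] contains exactly one change point tau_kk *)
  (kk s e : nat) (Hkk : (1 <= kk <= K)%N)
  (Hs : (1 <= s)%N) (He : (e <= T)%N)
  (Hse : (s <= tau kk < e)%N)
  (Hone : forall j, (1 <= j <= K)%N -> (s <= tau j <= e)%N -> j = kk) :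
  let n1 : R := (tau kk - s + 1)%:R in
  let n2 : R := (e - tau kk)%:R in
  let n : R := n1 + n2 in
  let rho : R := n1 * n2 / n in
  let ell : R := (ell_T tau K T)%:R in
  let diffC : R := Cexp P k Y s e - Cexp P k Y s (tau kk) - Cexp P k Y (tau kk).+1 e in
  (rho * mmd2 k (Pk kk) (Pk kk.+1)
     - ((4 * m%:R + 2) * M + (2 * m%:R ^+ 2 + 2 * m%:R) * M / n) <= diffC)
  /\
  (ell / 2 <= n1 -> ell / 2 <= n2 ->
     Delta_star2 (fun j => mmd2 k (Pk j) (Pk j.+1)) K / 4 * ell
     - ((4 * m%:R + 2) * M + (2 * m%:R ^+ 2 + 2 * m%:R) * M / ell) <= diffC).
Proof.
move=> n1 n2 n rho ell diffC.
have [tau_lo e_hi] :=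
  change_points_around_segment Htau0 HtauT Htau_incr Hkk Hs He Hse Hone.
have /andP[s_tk tk_e] := Hse.
pose E i j := \int[P]_w k (Y i w) (Y j w).
have E_sym i j : E i j = E j i by apply: eq_Rintegral => w _; exact: Hkpd.1.
have E_bound i j : 0 <= E i j <= M := expectation_kernel_bounded HYmeas Hkmeas HkM i j.
have M_ge0 : 0 <= M by case/andP: (E_bound 0%N 0%N) => E0; apply: le_trans.
have far := expectation_kernel_far HYmeas Hkmeas HkM Hmdep.
have law_l t : (s <= t <= tau kk)%N -> forall A, measurable A -> P (Y t @^-1` A) = Pk kk A.
  by move=> st; apply: (Hstat kk _).2; lia.
have law_r t : (tau kk < t <= e)%N -> forall A, measurable A -> P (Y t @^-1` A) = Pk kk.+1 A.
  by move=> te; apply: (Hstat kk.+1 _).2 => /=; lia.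
have kernel_bd := iterated_kernel_bounded Hkmeas HkM.
have part1 : rho * mmd2 k (Pk kk) (Pk kk.+1)
    - ((4 * m%:R + 2) * M + (2 * m%:R ^+ 2 + 2 * m%:R) * M / n) <= diffC.
  have se : (s <= e)%N by lia.
  have n1E : n1 = ((tau kk).+1 - s)%:R by rewrite /n1 addn1 subSn.
  have n2E : n2 = (e.+1 - (tau kk).+1)%:R by rewrite subSS.
  rewrite /diffC !(Cexp_seg_cost HYmeas Hkmeas HkM) //.
  apply: (seg_cost_gain_ge m E_sym E_bound _ n1E n2E);
    rewrite ?kernel_bd //.
  - by move=> i j si ij jt; apply: far; [lia|lia|apply: law_l; lia|apply: law_l; lia].
  - by move=> i j si ij jt; apply: far; [lia|lia|apply: law_r; lia|apply: law_r; lia].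
  - by move=> i j iA jB ij; apply: far; [lia|lia|apply: law_l; lia|apply: law_r; lia].
split=> // ell_n1 ell_n2; apply: le_trans part1; apply: gain_lower_balanced => //.
- by rewrite ltr0n (ell_T_gt0 HtauT Htau_incr).
- by rewrite (ltW HDstar) Delta_star2_le.
- by rewrite mulr_ge0 // addr_ge0 ?mulr_ge0 ?ler0n ?exprn_ge0.
Qed.
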